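(* Let $\Gamma$ be a symmetric multiset of even cardinality $N$, take $\tilde\Gamma=\Gamma$ (so $M=N$) and $p=0$, and let $k\ge 0$. Then the exponential pseudo-spline symbol $$a^{(k)}_{N,N,\Gamma}(z)=B^{(k)}_{N,\Gamma}(z)\,c^{(k)}_{N,\Gamma}(z)$$ is interpolatory, i.e. $$a^{(k)}_{N,N,\Gamma}(z)+a^{(k)}_{N,N,\Gamma}(-z)=2\quad\text{for all } z\neq0.$$
   Context: $\mathbb{R}^+$ denotes the positive reals, and $\lceil L\rceil:=\min\{m\in\mathbb{Z}:m\ge L\}$. Symmetric multiset: a multiset $\Gamma=\{\gamma_1,\dots,\gamma_N\}$ of complex numbers is symmetric if there exist distinct $\theta_1,\dots,\theta_q\in\mathbb{R}^+\cup\mathrm{i}[0,\pi)$ and positive integers $t_1,\dots,t_q$ such that: - $\Gamma$ consists of $\theta_j$ and $-\theta_j$, each with multiplicity $t_j$; - when $N$ is odd, $\Gamma$ contains one additional element $0$. Non-normalized symbol: $\tilde B^{(k)}_{L,\Lambda}(z):=z^{-\lceil L/2\rceil}\prod_{i=1}^L(e^{\lambda_i/2^{k+1}}z+1)$. Normalized symbol for $N$ even: fix one $\theta_j$ and set $B^{(k)}_{N,\Gamma}:=K^{(k)}\tilde B^{(k)}_{N,\Gamma}$ with $(K^{(k)})^{-1}=(e^{-\theta_j/2^{k+1}}+e^{\theta_j/2^{k+1}})\,\tilde B^{(k)}_{N-2,\Gamma'}(e^{\theta_j/2^{k+1}})$, where $\Gamma'$ is $\Gamma$ minus one copy each of $\pm\theta_j$.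 Let $\vartheta_1,\dots,\vartheta_n$ be the distinct values of $\Gamma$ with multiplicities $\tau_\ell$, and set $z_\ell=e^{-\vartheta_\ell/2^{k+1}}$. Then $c^{(k)}_{N,\Gamma}$ is the unique odd-symmetric Laurent polynomial ($c(z)=c(z^{-1})$) with coefficients supported in $[-N/2+1,N/2-1]$ satisfying $$c^{(s)}(z_\ell)=\sum_{i=0}^s\binom{s}{i}v_{\ell,i}\,G^{(s-i)}(z_\ell)\qquad(s=0,\dots,\tau_\ell-1),$$ where $G=1/B^{(k)}_{N,\Gamma}$ and $v_{\ell,i}=2\delta_{i,0}$ (the case $p=0$). *)

From Stdlib Require Import Reals Lra.
From Stdlib Require Import ClassicalEpsilon FunctionalExtensionality.
From HB Require Import structures.
From mathcomp Require Import all_boot all_order all_algebra.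

Set Implicit Arguments.
Unset Strict Implicit.
Unset Printing Implicit Defensive.

Record cplx := Cplx { Re : R; Im : R }.

Definition cplx_eqb (x y : cplx) : bool :=
  if Req_EM_T (Re x) (Re y) then
    if Req_EM_T (Im x) (Im y) then true else false
  else false.

Lemma cplx_eqP : Equality.axiom cplx_eqb.
Proof.
move=> [a b] [c d]; rewrite /cplx_eqb /=.
destruct (Req_EM_T a c) as [h1|h1]; last by constructor => -[].
destruct (Req_EM_T b d) as [h2|h2]; last by constructor => -[].
by constructor; rewrite h1 h2.
Qed.

HB.instance Definition _ := hasDecEq.Build cplx cplx_eqP.

Definition cplx_find (P : pred cplx) (n : nat) : option cplx :=
  match excluded_middle_informative (exists x, P x) with
  | left h => Some (proj1_sig (constructive_indefinite_description _ h))
  | right _ => None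
  end.

Lemma cplx_find_correct P n x : cplx_find P n = Some x -> P x.
Proof.
rewrite /cplx_find; case: excluded_middle_informative => // h [<-].
exact: proj2_sig (constructive_indefinite_description _ h).
Qed.

Lemma cplx_find_complete (P : pred cplx) :
  (exists x, P x) -> exists n, cplx_find P n.
Proof.
move=> h; exists 0%N; rewrite /cplx_find.
by case: excluded_middle_informative.
Qed.

Lemma cplx_find_ext (P Q : pred cplx) : P =1 Q -> cplx_find P =1 cplx_find Q.
Proof.
move=> hPQ n.
have -> : P = Q by apply: functional_extensionality.
by [].
Qed.

HB.instance Definition _ :=
  hasChoice.Build cplx cplx_find_correct cplx_find_complete cplx_find_ext.

Section CplxOps.
Local Open Scope R_scope.
Definition cadd (x y : cplx) := Cplx (Re x + Re y) (Im x + Im y).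
Definition copp (x : cplx) := Cplx (- Re x) (- Im x).
Definition czero := Cplx R0 R0.
Definition cone := Cplx R1 R0.
Definition cmul (x y : cplx) :=
  Cplx (Re x * Re y - Im x * Im y) (Re x * Im y + Im x * Re y).
Definition cinv (x : cplx) :=
  let n := (Re x * Re x + Im x * Im x) in
  Cplx (Re x / n) (- Im x / n).

Lemma cplx_ext (a b c d : R) : a = c -> b = d -> Cplx a b = Cplx c d.
Proof. by move=> -> ->. Qed.

Lemma caddA : associative cadd.
Proof. move=> [a b] [c d] [e f]; apply: cplx_ext => /=; ring. Qed.
Lemma caddC : commutative cadd.
Proof. move=> [a b] [c d]; apply: cplx_ext => /=; ring. Qed.
Lemma cadd0 : left_id czero cadd.
Proof. move=> [a b]; apply: cplx_ext => /=; ring. Qed.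
Lemma caddN : left_inverse czero copp cadd.
Proof. move=> [a b]; apply: cplx_ext => /=; ring. Qed.

HB.instance Definition _ := GRing.isZmodule.Build cplx caddA caddC cadd0 caddN.

Lemma cmulA : associative cmul.
Proof. move=> [a b] [c d] [e f]; apply: cplx_ext => /=; ring. Qed.
Lemma cmulC : commutative cmul.
Proof. move=> [a b] [c d]; apply: cplx_ext => /=; ring. Qed.
Lemma cmul1 : left_id cone cmul.
Proof. move=> [a b]; apply: cplx_ext => /=; ring. Qed.
Lemma cmulDl : left_distributive cmul cadd.
Proof. move=> [a b] [c d] [e f]; apply: cplx_ext => /=; ring. Qed.
Lemma cone_neq0 : (cone != czero)%B.
Proof. apply/eqP => -[] h; lra. Qed.

HB.instance Definition _ :=
  GRing.Zmodule_isComNzRing.Build cplx cmulA cmulC cmul1 cmulDl cone_neq0.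

Lemma cmulV (x : cplx) : x != czero -> cmul (cinv x) x = cone.
Proof.
case: x => a b /eqP hx.
have hn : (a * a + b * b <> 0).
  move=> h; apply: hx.
  have ha : a = 0 by nra.
  have hb : b = 0 by nra.
  by rewrite ha hb.
apply: cplx_ext => /=; field; exact: hn.
Qed.

Lemma cinv0 : cinv czero = czero.
Proof. apply: cplx_ext => /=; rewrite /Rdiv; ring. Qed.

End CplxOps.

HB.instance Definition _ := GRing.ComNzRing_isField.Build cplx cmulV cinv0.

Definition Cexp (x : cplx) : cplx :=
  Cplx (Rmult (exp (Re x)) (cos (Im x))) (Rmult (exp (Re x)) (sin (Im x))).

Local Open Scope ring_scope.

Definition admissible_theta (t : cplx) : Prop :=
  (Im t = R0 /\ Rlt 0 (Re t)) \/ (Re t = R0 /\ Rle 0 (Im t) /\ Rlt (Im t) PI).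

(* The symmetric multiset Gamma built from distinct thetas with
   multiplicities ts (N even case: no extra 0 element). *)
Definition sym_multiset (thetas : seq cplx) (ts : seq nat) : seq cplx :=
  flatten [seq nseq p.2 p.1 ++ nseq p.2 (- p.1) | p <- zip thetas ts].

Definition ek (k : nat) (l : cplx) : cplx := Cexp (l / (2 ^ k.+1)%:R).

Definition Btilde (k : nat) (Lam : seq cplx) (z : cplx) : cplx :=
  z ^- uphalf (size Lam) * \prod_(l <- Lam) (ek k l * z + 1).

Definition Bpoly (k : nat) (Lam : seq cplx) : {poly cplx} :=
  \prod_(l <- Lam) (ek k l *: 'X + 1).

Definition Knorm (k : nat) (Gam : seq cplx) (th : cplx) : cplx :=
  ((ek k (- th) + ek k th) * Btilde k (rem (- th) (rem th Gam)) (ek k th))^-1.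

(* s-th derivative of the rational function p/q, obtained by iterating the
   quotient rule; returns the pair (numerator, denominator). *)
Fixpoint rat_deriv (s : nat) (p q : {poly cplx}) : {poly cplx} * {poly cplx} :=
  match s with
  | 0 => (p, q)
  | s'.+1 => let pq := rat_deriv s' p q in
             (pq.1^`() * pq.2 - pq.1 * pq.2^`(), pq.2 ^+ 2)
  end.

Definition rat_deriv_at (s : nat) (p q : {poly cplx}) (z : cplx) : cplx :=
  (rat_deriv s p q).1.[z] / (rat_deriv s p q).2.[z].

From Stdlib Require Import Reals Lra.
From HB Require Import structures.
From mathcomp Require Import all_boot all_order all_algebra.
Set Implicit Arguments.
Unset Strict Implicit.
Unset Printing Implicit Defensive.
Import GRing.Theory.
Local Open Scope ring_scope.

(* Write N = 2m + 2, z_v = e^{-v/2^{k+1}} and P for the polynomial part of B.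
   With p = 0 the Hermite conditions say that c(z)/z^m - 2 z^{m+1}/(K P(z))
   vanishes to order tau_v at every z_v, hence so does the polynomial
     D(X) = c(X) K P(X) - 2 X^{2m+1} - P(-X) K c(-X),
   the last term because P(-X) has the factor (X - z_v)^{tau_v} as well.
   D is odd, so it also vanishes to order tau_v at every -z_v.  The 2N points
   +-z_v are distinct (all v lie in the strip |Im v| < pi), and D has degree
   less than 2N, so D = 0; evaluated at z this is a(z) + a(-z) = 2. *)

(** * The complex exponential on a horizontal strip *)

Definition in_strip (v : cplx) : Prop := Rlt (- PI) (Im v) /\ Rlt (Im v) PI.

Lemma in_stripN v : in_strip v -> in_strip (- v).
Proof. by case=> h1 h2; split => /=; lra. Qed.

Lemma admissible_in_strip t : admissible_theta t -> in_strip t.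
Proof.
rewrite /in_strip => -[[-> ?]|[_ [? ?]]]; have := PI_RGT_0; split; lra.
Qed.

Lemma natr_cplx n : (n%:R : cplx) = Cplx (INR n) R0.
Proof.
elim: n => [//|n IH]; rewrite mulrS IH S_INR.
by apply: cplx_ext => /=; rewrite /GRing.one /=; ring.
Qed.

Lemma natr_cplx_neq0 n : (n.+1%:R : cplx) != 0.
Proof.
rewrite natr_cplx; apply/eqP => -[] h.
by have := lt_0_INR n.+1 (Nat.lt_0_succ n); rewrite [INR _]h; lra.
Qed.

Lemma CexpD a b : Cexp (a + b) = Cexp a * Cexp b.
Proof.
case: a b => [a1 a2] [b1 b2]; rewrite /Cexp /=.
by apply: cplx_ext; rewrite /= exp_plus ?cos_plus ?sin_plus; ring.
Qed.

Lemma Cexp0 : Cexp 0 = 1.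
Proof. by rewrite /Cexp /= exp_0 cos_0 sin_0; apply: cplx_ext; ring. Qed.

Lemma sin_eq0_strip x : Rlt (- PI) x -> Rlt x PI -> sin x = R0 -> x = R0.
Proof.
move=> h1 h2 hs; have [hx|[//|hx]] := Rtotal_order x 0.
- by have := sin_gt_0 (- x); rewrite sin_neg hs; lra.
- by have := sin_gt_0 x; rewrite hs; lra.
Qed.

Lemma Cexp_real_strip w : in_strip w -> Im (Cexp w) = R0 -> Im w = R0.
Proof.
case: w => a b [h1 h2] /= e; apply: sin_eq0_strip => //.
have := exp_pos a => ha; apply: (Rmult_eq_reg_l (exp a)); [by rewrite e; ring | lra].
Qed.

Lemma Cexp_neqN1 w : in_strip w -> Cexp w != -1.
Proof.
move=> hw; apply/eqP => e.
have hb : Im w = R0 by apply: Cexp_real_strip; rewrite // e; exact: Ropp_0.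
move: e; case: w {hw} hb => a b /= -> -[e1 _].
by have := exp_pos a; move: e1; rewrite cos_0 /GRing.opp /=; lra.
Qed.

Lemma Cexp_eq1 w : in_strip w -> Cexp w = 1 -> w = 0.
Proof.
move=> hw e; have hb : Im w = R0 by apply: Cexp_real_strip; rewrite // e.
move: e; case: w {hw} hb => a b /= -> -[+ _]; rewrite cos_0 Rmult_1_r => e1.
by have -> : a = R0 by apply: exp_inv; rewrite e1 exp_0.
Qed.

Lemma Re_Cexp_gt0 w : Rlt (- (PI / 2)) (Im w) -> Rlt (Im w) (PI / 2) ->
  Rlt R0 (Re (Cexp w)).
Proof. by move=> h1 h2; apply: Rmult_lt_0_compat; [apply: exp_pos | apply: cos_gt_0]. Qed.

Lemma Im_div_natr w n : Im (w / n.+1%:R) = Rdiv (Im w) (INR n.+1).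
Proof.
have := lt_0_INR n.+1 (Nat.lt_0_succ n).
rewrite natr_cplx; case: w => a b /= hn; rewrite /GRing.inv /GRing.mul /=.
by field; lra.
Qed.

Section ScaledExponential.
Variable k : nat.
Local Notation D := ((2 ^ k.+1)%:R : cplx).

Lemma Im_div_pow2 w : Im (w / D) = Rdiv (Im w) (INR (2 ^ k.+1)).
Proof. by rewrite -(prednK (expn_gt0 2 k.+1)) Im_div_natr. Qed.

Lemma pow2_ge2 : Rle 2 (INR (2 ^ k.+1)).
Proof. by apply: (le_INR 2); apply/leP; rewrite expnS leq_pmulr // expn_gt0. Qed.

Lemma in_strip_div_half x : in_strip x ->
  Rlt (- (PI / 2)) (Im (x / D)) /\ Rlt (Im (x / D)) (PI / 2).
Proof.
move=> [h1 h2]; rewrite Im_div_pow2; have := pow2_ge2.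
move: (INR _) => d hd; rewrite /Rdiv.
have hi : Rlt 0 (Rinv d) by apply: Rinv_0_lt_compat; lra.
have hid : Rmult (Rinv d) d = R1 by field; lra.
by split; nra.
Qed.

Lemma in_strip_addr_div x y : in_strip x -> in_strip y -> in_strip ((x + y) / D).
Proof.
move=> /in_strip_div_half [h1 h2] /in_strip_div_half [h3 h4]; rewrite /in_strip.
have -> : Im ((x + y) / D) = Rplus (Im (x / D)) (Im (y / D)) by rewrite mulrDl.
by split; lra.
Qed.

Lemma ekD x y : ek k x * ek k y = ek k (x + y).
Proof. by rewrite /ek mulrDl CexpD. Qed.

Lemma ekNr x : ek k (- x) * ek k x = 1.
Proof. by rewrite ekD addNr /ek mul0r Cexp0. Qed.

Lemma Re_ek_gt0 x : in_strip x -> Rlt R0 (Re (ek k x)).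
Proof. by move=> /in_strip_div_half [h1 h2]; apply: Re_Cexp_gt0. Qed.

Lemma ek_neq0 x : in_strip x -> ek k x != 0.
Proof. by move=> /Re_ek_gt0 h; apply/eqP => e; rewrite e /= in h; lra. Qed.

Lemma ek_neqN x y : in_strip x -> in_strip y -> ek k x != - ek k y.
Proof.
move=> /Re_ek_gt0 hx /Re_ek_gt0 hy; apply/eqP => e.
have ReN : Re (- ek k y) = Ropp (Re (ek k y)) by [].
by move: hx; rewrite e ReN; lra.
Qed.

Lemma ekM_add1_neq0 x y : in_strip x -> in_strip y -> ek k x * ek k y + 1 != 0.
Proof.
move=> hx hy; rewrite ekD addr_eq0 /ek.
exact: Cexp_neqN1 (in_strip_addr_div hx hy).
Qed.

Lemma ek_inj x y : in_strip x -> in_strip y -> ek k x = ek k y -> x = y.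
Proof.
move=> hx hy e.
have : ek k x * ek k (- y) = 1 by rewrite e mulrC ekNr.
rewrite ekD => /(Cexp_eq1 (in_strip_addr_div hx (in_stripN hy))) /eqP.
rewrite mulf_eq0 invr_eq0 -(prednK (expn_gt0 2 k.+1)) (negPf (natr_cplx_neq0 _)).
by rewrite orbF subr_eq0 => /eqP.
Qed.

End ScaledExponential.

(* Loaded only now: its [ring] and [field] shadow Stdlib's, used above on R. *)
From mathcomp Require Import ring zify.

(** * Derivatives of rational functions *)

Definition deriv_frac (f : {poly cplx} * {poly cplx}) : {poly cplx} * {poly cplx} :=
  (f.1^`() * f.2 - f.1 * f.2^`(), f.2 ^+ 2).

Definition frac_eq (f g : {poly cplx} * {poly cplx}) := f.1 * g.2 = g.1 * f.2.

Definition frac_add (f g : {poly cplx} * {poly cplx}) : {poly cplx} * {poly cplx} :=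
  (f.1 * g.2 + g.1 * f.2, f.2 * g.2).

Lemma rat_derivS s p q : rat_deriv s.+1 p q = deriv_frac (rat_deriv s p q).
Proof. by []. Qed.

Lemma rat_derivSr s p q :
  rat_deriv s.+1 p q = rat_deriv s (deriv_frac (p, q)).1 (deriv_frac (p, q)).2.
Proof. by elim: s => [//|s IH]; rewrite rat_derivS IH. Qed.

Lemma rat_deriv_den s p q : (rat_deriv s p q).2 = q ^+ (2 ^ s).
Proof. by elim: s => [//|s IH] /=; rewrite IH -exprM expnS mulnC. Qed.

Lemma rat_derivZ s a p q :
  rat_deriv s (a *: p) q = (a *: (rat_deriv s p q).1, (rat_deriv s p q).2).
Proof.
elim: s => [//|s IH]; rewrite rat_derivS IH /deriv_frac /= derivZ.
by rewrite scalerBr -!scalerAl.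
Qed.

Lemma deriv_frac_eq f g : frac_eq f g -> frac_eq (deriv_frac f) (deriv_frac g).
Proof.
case: f g => [f1 f2] [g1 g2]; rewrite /frac_eq /deriv_frac /= => E.
have E' : f1^`() * g2 + f1 * g2^`() = g1^`() * f2 + g1 * f2^`().
  by rewrite -!derivM E.
apply/eqP; rewrite -subr_eq0; apply/eqP.
transitivity (f2 * g2 * ((f1^`() * g2 + f1 * g2^`()) - (g1^`() * f2 + g1 * f2^`()))
   - (f1 * g2 - g1 * f2) * (f2^`() * g2 + g2^`() * f2)); first by ring.
by rewrite E' E !subrr mulr0 mul0r subrr.
Qed.

Lemma deriv_frac_add f g :
  deriv_frac (frac_add f g) = frac_add (deriv_frac f) (deriv_frac g).
Proof.
case: f g => [f1 f2] [g1 g2]; rewrite /deriv_frac /frac_add /=.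
by congr pair; [rewrite !derivD !derivM | ]; ring.
Qed.

Lemma rat_deriv_add s p1 q1 p2 q2 :
  frac_eq (rat_deriv s (p1 * q2 + p2 * q1) (q1 * q2))
          (frac_add (rat_deriv s p1 q1) (rat_deriv s p2 q2)).
Proof.
elim: s => [//|s IH].
by rewrite !rat_derivS -deriv_frac_add; apply: deriv_frac_eq.
Qed.

Lemma frac_eq_horner f g z : frac_eq f g -> f.2.[z] != 0 -> g.2.[z] != 0 ->
  f.1.[z] / f.2.[z] = g.1.[z] / g.2.[z].
Proof.
move=> /(congr1 (horner^~ z)); rewrite !hornerM => E hf hg.
by apply: (mulIf hf); rewrite divfK //; apply: (mulIf hg); rewrite E mulrAC divfK.
Qed.

Lemma rat_deriv_den_neq0 s p q z : q.[z] != 0 -> (rat_deriv s p q).2.[z] != 0.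
Proof. by move=> hq; rewrite rat_deriv_den horner_exp expf_neq0. Qed.

Lemma rat_deriv_atD s p1 q1 p2 q2 z : q1.[z] != 0 -> q2.[z] != 0 ->
  rat_deriv_at s (p1 * q2 + p2 * q1) (q1 * q2) z =
  rat_deriv_at s p1 q1 z + rat_deriv_at s p2 q2 z.
Proof.
move=> h1 h2; have h12 : (q1 * q2).[z] != 0 by rewrite hornerM mulf_neq0.
have d1 := rat_deriv_den_neq0 s p1 h1; have d2 := rat_deriv_den_neq0 s p2 h2.
rewrite /rat_deriv_at (frac_eq_horner (rat_deriv_add s p1 q1 p2 q2)).
- by rewrite /frac_add /= hornerD !hornerM; field; rewrite d1 d2.
- exact: rat_deriv_den_neq0.
- by rewrite /frac_add /= hornerM mulf_neq0.
Qed.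

Lemma rat_deriv_atZ s a p q z :
  rat_deriv_at s (a *: p) q z = a * rat_deriv_at s p q z.
Proof. by rewrite /rat_deriv_at rat_derivZ /= hornerZ mulrA. Qed.

(* Induction on t, applied to h/q and to (h/q)': writing h = g (X - z)^t, the
   numerator of (h/q)' is (X - z)^(t-1) (t g q + (X - z) A), so its
   divisibility by (X - z)^t forces g(z) = 0. *)
Lemma root_mult_rat_deriv t h q z : q.[z] != 0 ->
  (forall s, (s < t)%N -> rat_deriv_at s h q z = 0) -> ('X - z%:P) ^+ t %| h.
Proof.
elim: t h q => [|t IH] h q hq hs; first by rewrite expr0 dvd1p.
have Hh : ('X - z%:P) ^+ t %| h by apply: (IH h q hq) => s /ltnW; apply: hs.
have Hd : ('X - z%:P) ^+ t %| (deriv_frac (h, q)).1.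
  apply: (IH _ (deriv_frac (h, q)).2); first by rewrite /= horner_exp expf_neq0.
  by move=> s hst; rewrite /rat_deriv_at -rat_derivSr; apply: hs.
case: t {IH hs} Hh Hd (hs 0%N isT) => [_ _|n Hh Hd _].
  rewrite expr1 dvdp_XsubCl /root /rat_deriv_at /= => e.
  by apply/eqP; apply: (mulIf (invr_neq0 hq)); rewrite mul0r.
case/dvdpP: Hh => g hg; set L := 'X - z%:P in hg Hd *.
pose A := (g^`() * L + g * (n.+1)%:R%:P) * q - g * L * q^`().
have hdA : (deriv_frac (h, q)).1 = L ^+ n * A.
  rewrite /= hg derivM deriv_exp derivXsubC /= -mulr_natr exprS mul1r /A.
  by rewrite -polyC_natr /=; ring.
move: Hd; rewrite hdA exprS mulrC dvdp_mul2l ?expf_neq0 ?polyXsubC_eq0 //.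
rewrite dvdp_XsubCl /root /A !hornerE /= subrr !mulr0 !mul0r add0r subr0.
rewrite !mulf_eq0 (negPf hq) (negPf (natr_cplx_neq0 n)) !orbF => /eqP gz.
have /dvdpP [g1 hg1] : L %| g by rewrite /L dvdp_XsubCl /root gz.
by rewrite hg hg1 exprS -mulrA mulrC dvdp_mull // mulrC exprS dvdpp.
Qed.

(** * Root multiplicities and sizes of polynomials *)

Lemma count_mem_map_in (T1 T2 : eqType) (f : T1 -> T2) (s : seq T1) x :
  {in s &, injective f} -> x \in s -> count_mem (f x) (map f s) = count_mem x s.
Proof.
move=> f_inj xs; rewrite count_map; apply: eq_in_count => y ys /=.
exact: (inj_in_eq f_inj ys xs).
Qed.

Lemma size_polyDB_leq (R : nzRingType) (p q r : {poly R}) n :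
  (size p <= n)%N -> (size q <= n)%N -> (size r <= n)%N -> (size (p + q - r)%R <= n)%N.
Proof.
move=> sp sq sr; rewrite (leq_trans (size_polyD _ _)) // geq_max size_polyN sr.
by rewrite (leq_trans (size_polyD _ _)) // geq_max sp sq.
Qed.

Lemma comp_polyNX_invol (R : comNzRingType) (p : {poly R}) :
  (p \Po - 'X) \Po - 'X = p.
Proof.
have NXNX : (- 'X) \Po (- 'X) = 'X :> {poly R}.
  by rewrite -scaleN1r comp_polyZ comp_polyX scalerA mulrNN mulr1 scale1r.
by rewrite -comp_polyA NXNX comp_polyXr.
Qed.

Lemma root_mult_odd (R : fieldType) (p : {poly R}) a n :
  p \Po - 'X = - p -> ('X - a%:P) ^+ n %| p -> ('X - (- a)%:P) ^+ n %| p.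
Proof.
move=> p_odd /dvdpP [g hg]; apply/dvdpP; exists (- ((g \Po - 'X) * (-1) ^+ n)).
rewrite -[p]opprK -p_odd hg comp_polyM rmorphXn /= comp_polyB comp_polyX.
rewrite comp_polyC polyCN opprK -opprD -(mulN1r ('X + _)) exprMn mulrA mulNr.
by rewrite addrC.
Qed.

Lemma prod_XsubC_dvdp (F : fieldType) (zs : seq F) (p : {poly F}) :
  (forall x, x \in zs -> ('X - x%:P) ^+ count_mem x zs %| p) ->
  \prod_(x <- zs) ('X - x%:P) %| p.
Proof.
move=> hzs; rewrite -prodr_undup_exp_count.
have : {subset undup zs <= zs} by move=> x; rewrite mem_undup.
elim: (undup zs) (undup_uniq zs) => [|x u IH]; first by rewrite big_nil dvd1p.
move=> /= /andP [xu uu] sub; rewrite big_cons Gauss_dvdp.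
  rewrite hzs ?IH // ?sub ?mem_head // => y yu.
  by apply: sub; rewrite inE yu orbT.
apply: coprimep_expl; rewrite coprimep_sym coprimep_XsubC /root horner_prod.
rewrite prodf_seq_neq0; apply/allP => y yu /=.
by rewrite horner_exp hornerXsubC expf_neq0 // subr_eq0; apply: contraNneq xu => ->.
Qed.

(** * The symmetric multiset and the symbol *)

Lemma sym_multiset_cons t thetas n ts :
  sym_multiset (t :: thetas) (n :: ts) =
  nseq n t ++ nseq n (- t) ++ sym_multiset thetas ts.
Proof. by rewrite /sym_multiset /= catA. Qed.

Lemma sym_multiset_strip thetas ts :
  {in thetas, forall t, in_strip t} -> {in sym_multiset thetas ts, forall v, in_strip v}.
Proof.
elim: thetas ts => [|t thetas IH] [|n ts] //= hok v.
have ht : in_strip t by apply: hok; rewrite mem_head.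
rewrite sym_multiset_cons !mem_cat !mem_nseq.
case/or3P => [/andP [_ /eqP ->] // | /andP [_ /eqP ->] | ]; first exact: in_stripN.
by apply: IH => x hx; apply: hok; rewrite inE hx orbT.
Qed.

Lemma size_sym_multiset thetas ts : size ts = size thetas ->
  size (sym_multiset thetas ts) = (sumn ts).*2.
Proof.
elim: thetas ts => [|t thetas IH] [|n ts] //= [hs].
by rewrite sym_multiset_cons !size_cat !size_nseq IH // addnA addnn doubleD.
Qed.

Lemma horner_Bpoly k s z : (Bpoly k s).[z] = \prod_(l <- s) (ek k l * z + 1).
Proof. by rewrite /Bpoly horner_prod; apply: eq_bigr => l _; rewrite !hornerE. Qed.

Lemma Btilde_horner k s z :
  Btilde k s z = (z ^+ uphalf (size s))^-1 * (Bpoly k s).[z].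
Proof. by rewrite /Btilde horner_Bpoly. Qed.

Lemma size_Bpoly k s : (size (Bpoly k s) <= (size s).+1)%N.
Proof.
rewrite /Bpoly; elim: s => [|l s IH]; first by rewrite big_nil size_poly1.
rewrite big_cons (leq_trans (size_polyMleq _ _)) //.
have : (size ((ek k l *: 'X + 1)%R : {poly cplx}) <= 2)%N.
  rewrite (leq_trans (size_polyD _ _)) // geq_max size_poly1 andbT.
  by rewrite (leq_trans (size_scale_leq _ _)) // size_polyX.
by move: IH => /=; lia.
Qed.

(* The factor of P(-X) indexed by l = v vanishes at z_v = e^{-v/2^{k+1}}. *)
Lemma root_mult_Bpoly_compN k s v :
  ('X - (ek k (- v))%:P) ^+ count_mem v s %| Bpoly k s \Po - 'X.
Proof.
rewrite /Bpoly; elim: s => [|l s IH]; first by rewrite expr0 dvd1p.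
rewrite big_cons comp_polyM /=; case: (eqVneq l v) => [->|_]; last first.
  by rewrite add0n dvdp_mull.
rewrite add1n exprS dvdp_mul // dvdp_XsubCl /root horner_comp !hornerE mulrN.
by rewrite mulrC ekNr addNr.
Qed.

Lemma Knorm_neq0 k s th : in_strip th -> {in s, forall v, in_strip v} ->
  Knorm k s th != 0.
Proof.
move=> hth hs; rewrite /Knorm invr_eq0 mulf_neq0 //.
  have -> : ek k (- th) + ek k th = ek k (- th) * (ek k th * ek k th + 1).
    by rewrite mulrDr mulr1 mulrA ekNr mul1r addrC.
  by rewrite mulf_neq0 ?ek_neq0 ?ekM_add1_neq0 //; apply: in_stripN.
rewrite /Btilde mulf_neq0 ?invr_neq0 ?expf_neq0 ?ek_neq0 //.
rewrite prodf_seq_neq0; apply/allP => l hl /=.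
by apply: ekM_add1_neq0 => //; apply: hs; apply: mem_rem (mem_rem hl).
Qed.

(** * The defect polynomial *)

Section Interpolation.
Variables (k m : nat) (Gam : seq cplx) (K : cplx) (c : {poly cplx}).
Hypothesis Gam_strip : {in Gam, forall v, in_strip v}.
Hypothesis size_Gam : size Gam = (m.+1).*2.
Hypothesis K_neq0 : K != 0.
Hypothesis size_c : (size c <= (size Gam).-1)%N.
Hypothesis hermite : forall v s, v \in Gam -> (s < count_mem v Gam)%N ->
  rat_deriv_at s c 'X^m (ek k (- v)) =
  2 * rat_deriv_at s 'X^(m.+1) (K *: Bpoly k Gam) (ek k (- v)).

Local Notation P := (Bpoly k Gam).

Definition defect : {poly cplx} :=
  c * (K *: P) + (-2) *: 'X^(m.+1) * 'X^m - (P \Po - 'X) * (K *: (c \Po - 'X)).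

Lemma defect_root_mult v : v \in Gam ->
  ('X - (ek k (- v))%:P) ^+ count_mem v Gam %| defect.
Proof.
move=> hv; have Nv := in_stripN (Gam_strip hv).
have KPz : (K *: P).[ek k (- v)] != 0.
  rewrite hornerZ mulf_neq0 // horner_Bpoly prodf_seq_neq0.
  by apply/allP => l hl /=; apply: ekM_add1_neq0 => //; apply: Gam_strip.
have Xz : ('X^m : {poly cplx}).[ek k (- v)] != 0.
  by rewrite hornerXn expf_neq0 // ek_neq0.
rewrite dvdp_sub ?dvdp_mulr ?root_mult_Bpoly_compN //.
apply: (@root_mult_rat_deriv _ _ ('X^m * (K *: P))); first by rewrite hornerM mulf_neq0.
move=> s hs; rewrite rat_deriv_atD // rat_deriv_atZ (hermite hv hs).
by rewrite mulNr addrN.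
Qed.

Lemma defect_odd : defect \Po - 'X = - defect.
Proof.
have NX : (- 'X) ^+ m.+1 * (- 'X) ^+ m = - ('X ^+ m.+1 * 'X ^+ m) :> {poly cplx}.
  by rewrite !exprS -!mulrA -!exprMn mulrNN mulNr.
rewrite /defect !(comp_polyB, comp_polyD, comp_polyM, comp_polyZ).
rewrite !comp_polyNX_invol !comp_Xn_poly -!mul_polyC -(mulrA (-2)%:P) NX.
by ring.
Qed.

Lemma size_defect : (size defect <= (size Gam).*2)%N.
Proof.
have sNX : size (- 'X : {poly cplx}) = 2 by rewrite size_polyN size_polyX.
have scP : (size c + size P <= (size Gam).*2.+1)%N.
  by move: (leq_add size_c (size_Bpoly k Gam)); rewrite size_Gam; lia.
rewrite /defect; apply: size_polyDB_leq.
- by rewrite (leq_trans (size_polyMleq _ _)) // size_scale // -subn1 leq_subLR add1n.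
- rewrite -scalerAl -exprD (leq_trans (size_scale_leq _ _)) // size_polyXn.
  by rewrite size_Gam; lia.
- rewrite (leq_trans (size_polyMleq _ _)) // size_scale // !size_comp_poly2 //.
  by rewrite addnC -subn1 leq_subLR add1n.
Qed.

Lemma defect_eq0 : defect = 0.
Proof.
pose zs := [seq ek k (- v) | v <- Gam] ++ [seq - ek k (- v) | v <- Gam].
have Ninj : {in Gam &, injective (fun v => ek k (- v))}.
  move=> u v hu hv /(ek_inj (in_stripN (Gam_strip hu)) (in_stripN (Gam_strip hv))).
  exact: oppr_inj.
have disj u v : u \in Gam -> v \in Gam -> ek k (- u) != - ek k (- v).
  by move=> hu hv; apply: ek_neqN; apply: in_stripN; apply: Gam_strip.
have zs_dvd : \prod_(x <- zs) ('X - x%:P) %| defect.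
  apply: prod_XsubC_dvdp => x; rewrite mem_cat count_cat.
  case/orP => /mapP [v hv ->].
  - have -> : count_mem (ek k (- v)) [seq - ek k (- u) | u <- Gam] = 0%N.
      by apply/count_memPn/mapP => -[u hu /eqP]; apply/negP; apply: disj.
    by rewrite addn0 (count_mem_map_in Ninj hv); apply: defect_root_mult.
  - have -> : count_mem (- ek k (- v)) [seq ek k (- u) | u <- Gam] = 0%N.
      by apply/count_memPn/mapP => -[u hu /eqP]; rewrite eq_sym; apply/negP; apply: disj.
    rewrite add0n (count_mem_map_in (f := fun v => - ek k (- v))) //; last first.
      by move=> u w hu hw /oppr_inj; apply: Ninj.
    by apply: root_mult_odd; [exact: defect_odd | exact: defect_root_mult].
apply/eqP; apply: contraT => nz.
have := leq_trans (dvdp_leq nz zs_dvd) size_defect.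
by rewrite size_prod_XsubC size_cat !size_map addnn ltnn.
Qed.

Lemma interpolatory z : z != 0 ->
  let a w := K * ((w ^+ m.+1)^-1 * P.[w]) * (c.[w] * w ^- m) in
  a z + a (- z) = 2.
Proof.
move=> hz a; have := congr1 (horner^~ z) defect_eq0.
rewrite /defect /= !(hornerD, hornerN, hornerM, hornerZ, horner_comp, hornerXn).
rewrite hornerX horner0 /a.
have sign : (- z) ^+ m.+1 * (- z) ^+ m = - (z ^+ m.+1 * z ^+ m).
  by rewrite !exprS -!mulrA -!exprMn mulrNN mulNr.
move: sign; set u := z ^+ m.+1; set w := z ^+ m.
set u' := (- z) ^+ m.+1; set w' := (- z) ^+ m => sign hD.
have Nz : - z != 0 by rewrite oppr_eq0.
have [u0 w0 u'0 w'0] : [/\ u != 0, w != 0, u' != 0 & w' != 0].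
  by split; apply: expf_neq0.
have E : K * P.[z] * c.[z] - K * P.[- z] * c.[- z] = 2 * (u * w).
  by apply/eqP; rewrite -subr_eq0 -hD; apply/eqP; ring.
transitivity (K * P.[z] * c.[z] / (u * w) + K * P.[- z] * c.[- z] / (u' * w')).
  by field; rewrite u0 w0 u'0 w'0.
by rewrite sign invrN mulrN -mulrBl E mulfK // mulf_neq0.
Qed.

End Interpolation.

Lemma sum_binomial_delta0 (R : pzSemiRingType) (f : nat -> R) s :
  \sum_(i < s.+1) 'C(s, i)%:R * (2 * ((i : nat) == 0%N)%:R) * f (s - i)%N = 2 * f s.
Proof.
rewrite big_ord_recl big1 => [|i _]; last by rewrite mulr0 mulr0 mul0r.
by rewrite bin0 subn0 mulr1 mul1r addr0.
Qed.

Lemma sumn_gt0 (s : seq nat) : all (fun t => 0 < t)%N s -> s != [::] -> (0 < sumn s)%N.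
Proof. by case: s => // t s /= /andP [t_gt0 _] _; rewrite addn_gt0 t_gt0. Qed.

Theorem mainTheorem9
  (thetas : seq cplx) (ts : seq nat) (j : nat) (k : nat) (c : {poly cplx}) :
  uniq thetas ->
  (forall t, t \in thetas -> admissible_theta t) ->
  size ts = size thetas ->
  all (fun t => (0 < t)%N) ts ->
  (j < size thetas)%N ->
  let Gam := sym_multiset thetas ts in
  let N := size Gam in
  let th := nth 0 thetas j in
  let K := Knorm k Gam th in
  (size c <= N.-1)%N ->
  let cfun := fun z : cplx => c.[z] * z ^- (N./2).-1 in
  (forall z : cplx, z != 0 -> cfun z = cfun z^-1) ->
  (forall (vt : cplx) (s : nat), vt \in Gam -> (s < count_mem vt Gam)%N ->
     rat_deriv_at s c 'X^((N./2).-1) (ek k (- vt)) =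
     \sum_(i < s.+1) 'C(s, i)%:R * (2 * ((i : nat) == 0%N)%:R) *
        rat_deriv_at (s - i) 'X^(uphalf N) (K *: Bpoly k Gam) (ek k (- vt))) ->
  let a := fun z : cplx => K * Btilde k Gam z * cfun z in
  forall z : cplx, z != 0 -> a z + a (- z) = 2.
Proof.
move=> _ adm size_ts ts_pos j_lt Gam N th K size_c cfun _ hermite a z z_neq0.
have Gam_strip : {in Gam, forall v, in_strip v}.
  by apply: sym_multiset_strip => t /adm /admissible_in_strip.
have th_strip : in_strip th by apply/admissible_in_strip/adm/mem_nth.
have sum_gt0 : (0 < sumn ts)%N.
  by apply: sumn_gt0; rewrite // -size_eq0 size_ts -lt0n (leq_ltn_trans _ j_lt).
set m := (sumn ts).-1.
have size_Gam : N = (m.+1).*2 by rewrite prednK // /N size_sym_multiset.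
have half_N : (N./2).-1 = m by rewrite size_Gam doubleK.
have uphalf_N : uphalf N = m.+1 by rewrite size_Gam uphalf_double.
rewrite /a /cfun !Btilde_horner -/N half_N uphalf_N.
apply: (interpolatory Gam_strip size_Gam (Knorm_neq0 k th_strip Gam_strip) size_c _ z_neq0).
move=> v s hv hs; have := hermite v s hv hs.
by rewrite (sum_binomial_delta0 (fun n => rat_deriv_at n _ _ _)) half_N uphalf_N.
Qed.
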